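(* Let the standing assumptions (listed in the context) hold and let $(x_k)$ be generated by Algorithm SLBFGS. Then there is a constant $C>0$ such that $\|B_k\|+\|B_k^{-1}\|\le C\max\{1,\|\nabla\mathcal{J}(x_k)\|^{-c_2}\}$ for all $k\ge0$, where $c_2$ is the constant from Algorithm SLBFGS.
   Context: Let $\mathcal{X}$ be a Hilbert space and $\mathcal{J}:\mathcal{X}\to\mathbb{R}$. Algorithm SLBFGS (structured inverse L-BFGS): inputs $x_0\in\mathcal{X}$, $\epsilon\geq0$, $\ell\in\mathbb{N}_0$, $c_0\geq 0$, $C_0\in[c_0,\infty]$, $c_s,c_1,c_2>0$; let $\tau_0>0$. For $k=0,1,2,\ldots$: let $m=\max\{0,k-\ell\}$; choose a symmetric positive semi-definite bounded linear operator $S_k$; set $B_k^{(0)}=\tau_k I+S_k$; let $B_k$ be obtained from $B_k^{(0)}$ and the currently stored pairs $(s_j,y_j)$, $m\le j\le k-1$, by successive L-BFGS updates $B\mapsto B+\frac{yy^T}{y^Ts}-\frac{Bss^TB}{s^TBs}$; set $d_k=-B_k^{-1}\nabla\mathcal{J}(x_k)$; compute a step length $\alpha_k>0$ by a line search; set $s_k=\alpha_kd_k$, $x_{k+1}=x_k+s_k$, $y_k=\nabla\mathcal{J}(x_{k+1})-\nabla\mathcal{J}(x_k)$; store $(s_k,y_k)$ only if $y_k^Ts_k>c_s\|s_k\|^2$; if $k\ge\ell$ remove $(s_m,y_m)$ from storage; stop with output $x_{k+1}$ if $\|\nabla\mathcal{J}(x_{k+1})\|\le\epsilon$; set $z_k=y_k-S_{k+1}s_k$,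 $\omega^l_{k+1}=\min\{c_0,c_1\|\nabla\mathcal{J}(x_{k+1})\|^{c_2}\}$, $\omega^u_{k+1}=\max\{C_0,(c_1\|\nabla\mathcal{J}(x_{k+1})\|^{c_2})^{-1}\}$; with $P(t)=\min\{\max\{t,\omega^l_{k+1}\},\omega^u_{k+1}\}$ and $\rho=z_k^Ts_k$ let $\tau^s=P(\rho/\|s_k\|^2)$, $\tau^g=P(\|z_k\|/\|s_k\|)$, $\tau^z=P(\|z_k\|^2/\rho)$; if $\rho>0$ choose $\tau_{k+1}\in[\tau^s,\tau^z]$, else choose $\tau_{k+1}\in[\tau^s,\tau^g]$. Line searches: Armijo with backtracking means, for fixed $\beta,\sigma\in(0,1)$, $\alpha_k$ is the largest number in $\{1,\beta,\beta^2,\ldots\}$ with $\mathcal{J}(x_{k+1})\le\mathcal{J}(x_k)+\alpha_k\sigma\nabla\mathcal{J}(x_k)^Td_k$; the Wolfe–Powell conditions are this Armijo inequality together with $\nabla\mathcal{J}(x_{k+1})^Td_k\ge\eta\nabla\mathcal{J}(x_k)^Td_k$ for fixed $\eta\in(\sigma,1)$. Let $\Omega=\{x:\mathcal{J}(x)\le\mathcal{J}(x_0)\}$ and $\Omega_\delta=\{x:\exists\hat x\in\Omega,\ \|x-\hat x\|<\delta\}$. Standing assumptions: 1) $\mathcal{J}$ is continuously differentiable and bounded below; 2) $\nabla\mathcal{J}$ is Lipschitz continuous on $\Omega$ with constant $L>0$; 3) $(\|S_k\|)$ is bounded; 4) the step sizes consistently satisfy the Armijo condition computed by backtracking, or consistently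 satisfy the Wolfe–Powell conditions; in the Armijo case there is $\delta>0$ such that $\mathcal{J}$ or $\nabla\mathcal{J}$ is uniformly continuous on $\Omega_\delta$; 5) $c_0=0$ is only chosen if then $\sup_k\|(B_k^{(0)})^{-1}\|<\infty$; 6) $C_0=\infty$ is only chosen if either the interval $[\tau^s,\tau^z]$ is replaced by $[\tau^s,\tau^g]$, or $\mathcal{J}$ is twice continuously differentiable, $\overline{G_k}:=\int_0^1\nabla^2\mathcal{J}(x_k+ts_k)\,dt-S_{k+1}$ is symmetric positive semi-definite for all $k$ and $(\|\overline{G_k}\|)$ is bounded. *)

From HB Require Import structures.
From mathcomp Require Import all_boot all_order all_algebra.
From mathcomp Require Import all_classical all_reals all_analysis.
Set Implicit Arguments. Unset Strict Implicit. Unset Printing Implicit Defensive.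
Import Order.TTheory GRing.Theory Num.Theory.
Import numFieldNormedType.Exports.
Local Open Scope classical_set_scope.
Local Open Scope ring_scope.

Section SLBFGS.
Variables (R : realType) (X : completeNormedModType R).

Definition is_inner_product (ip : X -> X -> R) : Prop :=
  [/\ (forall a u v w, ip (a *: u + v) w = a * ip u w + ip v w),
      (forall u v, ip u v = ip v u) &
      (forall u, ip u u = `|u| ^+ 2)].

Definition is_linear_op (T : X -> X) : Prop :=
  forall a u v, T (a *: u + v) = a *: T u + T v.

(* operator norm, in the extended reals (+oo for unbounded T) *)
Definition opnorm (T : X -> X) : \bar R :=
  ereal_sup [set (`|T u|)%:E | u in [set u : X | `|u| <= 1]].

Definition sym_psd_bounded (ip : X -> X -> R) (T : X -> X) : Prop :=
  [/\ is_linear_op T,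
      (forall u v, ip (T u) v = ip u (T v)),
      (forall u, 0 <= ip u (T u)) &
      (opnorm T < +oo)%E].

Definition is_inverse (T Tinv : X -> X) : Prop :=
  (forall u, T (Tinv u) = u) /\ (forall u, Tinv (T u) = u).

(* x : iterates, g : gradient map of J, S : structured part, tau : scalings *)
Variables (ip : X -> X -> R) (g : X -> X) (x : nat -> X).

Definition s_ (k : nat) : X := x k.+1 - x k.
Definition y_ (k : nat) : X := g (x k.+1) - g (x k).

(* the algorithm has not stopped before iteration k, i.e. x_k (and B_k) are
   computed: no stop test at iterations 0..k-1 succeeded *)
Definition running (eps : R) (k : nat) : Prop :=
  forall j, (j < k)%N -> eps < `|g (x j.+1)|.

(* (s_j, y_j) is stored at iteration j *)
Definition accepted (cs : R) (j : nat) : bool :=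
  cs * `|s_ j| ^+ 2 < ip (y_ j) (s_ j).

(* L-BFGS update  B |-> B + y y^T/(y^T s) - B s s^T B/(s^T B s) *)
Definition lbfgs_update (B : X -> X) (s y : X) : X -> X :=
  fun v => B v + (ip y v / ip y s) *: y - (ip s (B v) / ip s (B s)) *: B s.

Definition B0_ (S : nat -> X -> X) (tau : nat -> R) (k : nat) : X -> X :=
  fun v => tau k *: v + S k v.

(* B_k: successive updates of B_k^(0) with the stored pairs j = m..k-1,
   m = max(0, k - l), in increasing order *)
Definition Bk (cs : R) (l : nat) (S : nat -> X -> X) (tau : nat -> R)
    (k : nat) : X -> X :=
  let m := (k - l)%N in
  foldl (fun B j => if accepted cs j then lbfgs_update B (s_ j) (y_ j) else B)
        (B0_ S tau k) (iota m (k - m)).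

Definition Pproj (wl : R) (wu : \bar R) (t : R) : \bar R :=
  Order.min (Num.max t wl)%:E wu.

(* the admissible choice of tau_{k+1} (use_g : the variant where [tau^s,tau^z]
   is replaced by [tau^s,tau^g]) *)
Definition tau_rule (c0 : R) (C0 : \bar R) (c1 c2 : R) (use_g : bool)
    (S : nat -> X -> X) (tau : nat -> R) (k : nat) : Prop :=
  let sk := s_ k in
  let zk := y_ k - S k.+1 sk in
  let gn := `|g (x k.+1)| in
  let wl := Num.min c0 (c1 * gn `^ c2) in
  let wu := Order.max C0 ((c1 * gn `^ c2)^-1)%:E in
  let rho := ip zk sk in
  let taus := Pproj wl wu (rho / `|sk| ^+ 2) in
  let taug := Pproj wl wu (`|zk| / `|sk|) in
  let tauz := Pproj wl wu (`|zk| ^+ 2 / rho) in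
  if (0 < rho) && ~~ use_g then (taus <= (tau k.+1)%:E <= tauz)%E
  else (taus <= (tau k.+1)%:E <= taug)%E.

End SLBFGS.

Section Aux.
Variables (R : realType) (X : completeNormedModType R).
Variables (ip : X -> X -> R) (J : X -> R) (g : X -> X).

Definition armijo (sigma : R) (xk dk : X) (a : R) : Prop :=
  J (xk + a *: dk) <= J xk + a * sigma * ip (g xk) dk.

Definition armijo_backtracking (beta sigma : R) (xk dk : X) (alpha : R) : Prop :=
  exists i : nat, alpha = beta ^+ i /\ armijo sigma xk dk (beta ^+ i) /\
    forall i' : nat, (i' < i)%N -> ~ armijo sigma xk dk (beta ^+ i').

Definition wolfe_powell (sigma eta : R) (xk dk : X) (alpha : R) : Prop :=
  0 < alpha /\ armijo sigma xk dk alpha /\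
  eta * ip (g xk) dk <= ip (g (xk + alpha *: dk)) dk.

Definition Omega (x0 : X) : set X := [set u | J u <= J x0].
Definition Omega_delta (x0 : X) (delta : R) : set X :=
  [set u | exists2 v, Omega x0 v & `|u - v| < delta].

Definition unif_cont_on {Y : normedModType R} (A : set X) (f : X -> Y) : Prop :=
  forall e : R, 0 < e -> exists2 r : R, 0 < r &
    forall u v, A u -> A v -> `|u - v| < r -> `|f u - f v| < e.

Definition C1_with_gradient : Prop :=
  (forall u, differentiable J u) /\
  (forall u v, 'd J u v = ip (g u) v) /\ continuous g.

Definition C2 : Prop :=
  (forall u, differentiable g u) /\
  forall u (e : R), 0 < e -> exists2 r : R, 0 < r &
    forall w, `|w - u| < r ->
      (opnorm (fun v => ('d g w v - 'd g u v)%R) <= e%:E)%E.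

(* bilinear form of Gbar_k = int_0^1 Hess J(x_k + t s_k) dt - S_{k+1}:
   (u, v) |-> <u, Gbar_k v> *)
Definition Gbar_form (x : nat -> X) (S : nat -> X -> X) (k : nat) (u v : X) : R :=
  Rintegral lebesgue_measure `[0%R, 1%R]
    (fun t => ip u ('d g (x k + t *: s_ x k) v)) - ip u (S k.+1 v).

End Aux.

From HB Require Import structures.
From mathcomp Require Import all_boot all_order all_algebra.
From mathcomp Require Import all_classical all_reals all_analysis.
From mathcomp Require Import ring lra.
Set Implicit Arguments. Unset Strict Implicit. Unset Printing Implicit Defensive.
Import Order.TTheory GRing.Theory Num.Theory.
Import numFieldNormedType.Exports.
Local Open Scope classical_set_scope.
Local Open Scope ring_scope.

(* B_k is obtained from B_k^(0) = tau_k I + S_k by at most l L-BFGS updates,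
   each with a pair satisfying the curvature condition y^T s > c_s |s|^2 and,
   since the iterates stay in the level set (B_k is positive semi-definite, so
   d_k is a descent direction), the Lipschitz bound |y| <= L |s|.  Such an
   update raises a bound lam on <u, B u> / |u|^2 to lam + L^2 / c_s, and, by the
   inverse BFGS formula, a bound h on |B^-1| to h (1 + L / c_s)^2 + 1 / c_s.
   So it suffices that tau_k and 1 / tau_k are O(max {1, |g_k|^-c2}).  The
   projection P gives tau_k >= omega^l_k >= min (c0, c1 |g_k|^c2) and
   tau_k <= omega^u_k <= max (C0, (c1 |g_k|^c2)^-1); for C0 = oo one uses
   instead tau^g <= L + |S| and tau^z <= |Gbar_k|, the latter by Cauchy-Schwarz
   for Gbar_k, which maps s_k to z_k by the fundamental theorem of calculus. *)

Section SymmetricForm.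
Variables (R : realFieldType) (V : lmodType R) (q : V -> V -> R).
Hypotheses (qDZl : forall a u v w, q (a *: u + v) w = a * q u w + q v w)
  (qC : forall u v, q u v = q v u).

Lemma form0l w : q 0 w = 0.
Proof. by have := qDZl 1 0 0 w; rewrite scale1r addr0 mul1r; lra. Qed.

Lemma formDl u v w : q (u + v) w = q u w + q v w.
Proof. by have := qDZl 1 u v w; rewrite scale1r mul1r. Qed.

Lemma formZl a u w : q (a *: u) w = a * q u w.
Proof. by rewrite -[a *: u]addr0 qDZl form0l addr0. Qed.

Lemma formNl u w : q (- u) w = - q u w.
Proof. by rewrite -scaleN1r formZl mulN1r. Qed.

Lemma form0r w : q w 0 = 0.
Proof. by rewrite qC form0l. Qed.

Lemma formDr u v w : q w (u + v) = q w u + q w v.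
Proof. by rewrite qC formDl !(qC w). Qed.

Lemma formZr a u w : q w (a *: u) = a * q w u.
Proof. by rewrite qC formZl qC. Qed.

Lemma formNr u w : q w (- u) = - q w u.
Proof. by rewrite qC formNl qC. Qed.

Hypothesis q_ge0 : forall u, 0 <= q u u.

Lemma form_cauchy_schwarz u v : q u v ^+ 2 <= q u u * q v v.
Proof.
set a := q u u; set b := q u v; set c := q v v.
have expand r t : q (r *: u + t *: v) (r *: u + t *: v)
    = r ^+ 2 * a + 2 * r * t * b + t ^+ 2 * c.
  rewrite !(formDl, formZl, formDr, formZr) (qC v u) -/a -/b -/c; ring.
have [c0|] := ltP 0 c.
  have := q_ge0 (c *: u + (- b) *: v); rewrite expand.
  have -> : c ^+ 2 * a + 2 * c * - b * b + (- b) ^+ 2 * c = c * (a * c - b ^+ 2).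
    by ring.
  by rewrite pmulr_rge0 // subr_ge0.
rewrite le_eqVlt ltNge q_ge0 orbF => /eqP c0.
(* For c = 0 the form takes the value -(a + 2) b^2 at b u - (a + 1) v. *)
have := q_ge0 (b *: u + (- (a + 1)) *: v); rewrite expand c0 mulr0.
have a0 : 0 <= a := q_ge0 u.
nra.
Qed.

End SymmetricForm.

Section LinearOperator.
Variables (R : realType) (X : completeNormedModType R).

Section Linear.
Variable T : X -> X.
Hypothesis T_linear : is_linear_op T.

Lemma linop0 : T 0 = 0.
Proof.
have := T_linear 1 0 0; rewrite scale1r addr0 scale1r => T0.
by apply: (addrI (T 0)); rewrite addr0 -T0.
Qed.

Lemma linopD u v : T (u + v) = T u + T v.
Proof. by have := T_linear 1 u v; rewrite !scale1r. Qed.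

Lemma linopZ a u : T (a *: u) = a *: T u.
Proof. by have := T_linear a u 0; rewrite !addr0 linop0 addr0. Qed.

Lemma linopN u : T (- u) = - T u.
Proof. by rewrite -scaleN1r linopZ scaleN1r. Qed.

Lemma linopB u v : T (u - v) = T u - T v.
Proof. by rewrite linopD linopN. Qed.

Lemma norm_le_of_opnorm (K : R) : (opnorm T <= K%:E)%E -> forall u, `|T u| <= K * `|u|.
Proof.
move=> TK u; have [->|u0] := eqVneq u 0; first by rewrite linop0 !normr0 mulr0.
have nu : 0 < `|u| by rewrite normr_gt0.
have : ((`|T (`|u|^-1 *: u)|)%:E <= opnorm T)%E.
  apply: ereal_sup_ubound; exists (`|u|^-1 *: u) => //=.
  by rewrite normrZ normrV ?unitfE ?gt_eqF // normr_id mulVf ?gt_eqF.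
move=> /le_trans /(_ TK); rewrite lee_fin linopZ normrZ normrV ?unitfE ?gt_eqF //.
by rewrite normr_id ler_pdivrMl // mulrC.
Qed.

Lemma inverse_linear H : is_inverse T H -> is_linear_op H.
Proof.
move=> [TH HT] a u v.
by rewrite -{1}(TH u) -{1}(TH v) -linopZ -linopD HT.
Qed.

End Linear.

Lemma opnorm_ge0 (T : X -> X) : (0 <= opnorm T)%E.
Proof.
apply: (@le_trans _ _ (`|T 0|)%:E); first by rewrite lee_fin.
by apply: ereal_sup_ubound; exists 0; rewrite //= normr0.
Qed.

Lemma opnorm_le_of_norm (T : X -> X) (K : R) : 0 <= K ->
  (forall u, `|T u| <= K * `|u|) -> (opnorm T <= K%:E)%E.
Proof.
move=> K0 TK; apply: ge_ereal_sup => _ [u /= u1 <-].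
by rewrite lee_fin (le_trans (TK u)) // ler_piMr.
Qed.

End LinearOperator.

Lemma contraction_fixpoint (R : realType) (X : completeNormedModType R)
    (f : X -> X) (q : R) :
  0 <= q -> q < 1 -> (forall u v, `|f u - f v| <= q * `|u - v|) ->
  exists w, w = f w.
Proof.
move=> q0 q1 hf.
have ctr : is_contraction (totalfun_ setT f).
  by exists (NngNum q0); split => //= -[u v] _; exact: hf.
have [w _ fw] := banach_fixed_point ctr closedT (ex_intro _ 0 I).
by exists w.
Qed.

Section InnerProductSpace.
Variables (R : realType) (X : completeNormedModType R) (ip : X -> X -> R).
Hypothesis ip_inner : is_inner_product ip.

Lemma ipC u v : ip u v = ip v u.
Proof. by case: ip_inner. Qed.

Lemma ipvv u : ip u u = `|u| ^+ 2.
Proof. by case: ip_inner. Qed.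

Let ipDZl a u v w : ip (a *: u + v) w = a * ip u w + ip v w.
Proof. by case: ip_inner. Qed.

Lemma ip0l w : ip 0 w = 0.
Proof. exact: (@form0l R X ip ipDZl). Qed.

Lemma ipDl u v w : ip (u + v) w = ip u w + ip v w.
Proof. exact: (@formDl R X ip ipDZl). Qed.

Lemma ipZl a u w : ip (a *: u) w = a * ip u w.
Proof. exact: (@formZl R X ip ipDZl). Qed.

Lemma ipNl u w : ip (- u) w = - ip u w.
Proof. exact: (@formNl R X ip ipDZl). Qed.

Lemma ip0r w : ip w 0 = 0.
Proof. exact: (@form0r R X ip ipDZl ipC). Qed.

Lemma ipDr u v w : ip w (u + v) = ip w u + ip w v.
Proof. exact: (@formDr R X ip ipDZl ipC). Qed.

Lemma ipZr a u w : ip w (a *: u) = a * ip w u.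
Proof. exact: (@formZr R X ip ipDZl ipC). Qed.

Lemma ipNr u w : ip w (- u) = - ip w u.
Proof. exact: (@formNr R X ip ipDZl ipC). Qed.

Lemma ip_ext u v : (forall w, ip u w = ip v w) -> u = v.
Proof.
move=> uv; apply/eqP; rewrite -subr_eq0 -normr_eq0 -sqrf_eq0 -ipvv.
by rewrite ipDl ipNl !uv subrr.
Qed.

Lemma normr_ip_le u v : `|ip u v| <= `|u| * `|v|.
Proof.
have ip_ge0 w : 0 <= ip w w by rewrite ipvv sqr_ge0.
have := @form_cauchy_schwarz R X ip ipDZl ipC ip_ge0 u v.
rewrite !ipvv -exprMn => h.
by rewrite -(@ler_pXn2r _ 2) ?nnegrE ?mulr_ge0 // real_normK ?num_real.
Qed.

Definition symmetric_op (T : X -> X) := forall u v, ip (T u) v = ip u (T v).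
Definition psd_op (T : X -> X) := forall u, 0 <= ip u (T u).

Section SymmetricOperator.
Variable T : X -> X.
Hypotheses (T_linear : is_linear_op T) (T_sym : symmetric_op T).

Lemma op_cauchy_schwarz : psd_op T ->
  forall u v, ip (T u) v ^+ 2 <= ip (T u) u * ip (T v) v.
Proof.
move=> T_psd; apply: form_cauchy_schwarz.
- by move=> a u v w; rewrite T_linear ipDl ipZl.
- by move=> u v; rewrite T_sym ipC.
- by move=> u; rewrite ipC.
Qed.

Lemma norm_le_of_form (q : R) : psd_op T -> (forall u, ip u (T u) <= q * `|u| ^+ 2) ->
  forall u, `|T u| <= q * `|u|.
Proof.
move=> T_psd Tq u; have [->|u0] := eqVneq u 0.
  by rewrite linop0 // !normr0 mulr0.
have nu : 0 < `|u| by rewrite normr_gt0.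
have q0 : 0 <= q.
  by rewrite -(pmulr_lge0 _ (exprn_gt0 2 nu)) (le_trans (T_psd u)).
have [->|Tu0] := eqVneq (T u) 0; first by rewrite normr0 mulr_ge0.
have nTu : 0 < `|T u| by rewrite normr_gt0.
have := op_cauchy_schwarz T_psd u (T u).
rewrite ipvv (ipC (T u) u) (ipC (T (T u))) => CS.
have : `|T u| ^+ 2 * `|T u| ^+ 2 <= (q * `|u|) ^+ 2 * `|T u| ^+ 2.
  rewrite -expr2 (_ : _ * _ = (q * `|u| ^+ 2) * (q * `|T u| ^+ 2)); last by ring.
  exact: le_trans CS (ler_pM (T_psd _) (T_psd _) (Tq _) (Tq _)).
by rewrite ler_pM2r ?exprn_gt0 // ler_pXn2r ?nnegrE ?mulr_ge0.
Qed.

End SymmetricOperator.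

Section CoerciveOperator.
Variable T : X -> X.
Hypotheses (T_linear : is_linear_op T) (T_sym : symmetric_op T).

Lemma coercive_injective (c : R) : 0 < c -> (forall u, c * `|u| ^+ 2 <= ip u (T u)) ->
  injective T.
Proof.
move=> c0 Tc u v Tuv; apply/eqP.
rewrite -subr_eq0 -normr_eq0 -sqrf_eq0 eq_le sqr_ge0 andbT.
by have := Tc (u - v); rewrite linopB // Tuv subrr ip0r pmulr_rle0.
Qed.

Lemma coercive_surjective (c K : R) : 0 < c ->
  (forall u, c * `|u| ^+ 2 <= ip u (T u)) ->
  (forall u, ip u (T u) <= K * `|u| ^+ 2) -> forall v, exists w, T w = v.
Proof.
(* T w = v iff w is a fixed point of the contraction w |-> v/M + (I - T/M) w. *)
move=> c0 Tc TK v.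
pose M : R := `|K| + c.
have M0 : 0 < M by rewrite ltr_wpDl.
pose A u := u - M^-1 *: T u.
have A_linear : is_linear_op A.
  by move=> a u w; apply: ip_ext => t; rewrite /A T_linear !(ipDl, ipZl, ipNl); ring.
have A_sym : symmetric_op A.
  by move=> u w; rewrite /A ipDl ipDr ipNl ipNr ipZl ipZr T_sym.
have ipA u : ip u (A u) = `|u| ^+ 2 - M^-1 * ip u (T u).
  by rewrite /A ipDr ipNr ipZr ipvv.
have A_psd : psd_op A.
  move=> u; rewrite ipA subr_ge0 ler_pdivrMl // (le_trans (TK u)) // ler_wpM2r //.
  by rewrite (le_trans (ler_norm K)) // lerDl ltW.
pose q : R := 1 - c / M.
have q0 : 0 <= q by rewrite subr_ge0 ler_pdivrMr // mul1r lerDr.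
have q1 : q < 1 by rewrite ltrBlDr ltrDl divr_gt0.
have A_contr : forall u, `|A u| <= q * `|u|.
  apply: norm_le_of_form => // u.
  rewrite ipA /q mulrBl mul1r lerD2l lerN2 mulrAC mulrC.
  by apply: ler_wpM2l; [rewrite invr_ge0 ltW | exact: Tc].
pose f w := M^-1 *: v + A w.
have f_contr u w : `|f u - f w| <= q * `|u - w|.
  by rewrite /f opprD addrACA subrr add0r -linopB // A_contr.
have [w fw] := contraction_fixpoint q0 q1 f_contr.
exists w; apply/esym/eqP; move/eqP: fw; rewrite /f /A addrCA -subr_eq0 opprD addrA.
by rewrite subrr sub0r oppr_eq0 -scalerBr scaler_eq0 invr_eq0 gt_eqF //= subr_eq0.
Qed.

Lemma coercive_invertible (c K : R) : 0 < c ->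
  (forall u, c * `|u| ^+ 2 <= ip u (T u)) ->
  (forall u, ip u (T u) <= K * `|u| ^+ 2) ->
  exists2 H, is_inverse T H & forall v, `|H v| <= c^-1 * `|v|.
Proof.
move=> c0 Tc TK.
have [H TH] := choice (coercive_surjective c0 Tc TK).
exists H; first by split=> // u; apply: (coercive_injective c0 Tc); rewrite TH.
move=> v; have [->|Hv0] := eqVneq (H v) 0.
  by rewrite normr0 mulr_ge0 // invr_ge0 ltW.
have nHv : 0 < `|H v| by rewrite normr_gt0.
rewrite ler_pdivlMl // -(ler_pM2r nHv) -mulrA -expr2.
apply: le_trans (Tc (H v)) _; rewrite TH.
by rewrite (le_trans (ler_norm _)) // (le_trans (normr_ip_le _ _)) // mulrC.
Qed.

End CoerciveOperator.

Section LBFGSUpdate.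
Variables (B : X -> X) (s y : X).
Hypotheses (B_linear : is_linear_op B) (B_sym : symmetric_op B) (B_psd : psd_op B).

Lemma lbfgs_update_linear : is_linear_op (lbfgs_update ip B s y).
Proof.
move=> a u v; apply: ip_ext => w; rewrite /lbfgs_update B_linear.
rewrite !(ipDl, ipZl, ipNl, ipDr, ipZr, ipNr); ring.
Qed.

Lemma lbfgs_update_sym : symmetric_op (lbfgs_update ip B s y).
Proof.
move=> u v; rewrite /lbfgs_update !(ipDl, ipZl, ipNl, ipDr, ipZr, ipNr).
rewrite B_sym (ipC u y) (B_sym s v) (ipC u (B s)) (B_sym s u); ring.
Qed.

Let lbfgs_updateE u : ip u (lbfgs_update ip B s y u) =
  ip u (B u) + ip y u ^+ 2 / ip y s - ip s (B u) ^+ 2 / ip s (B s).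
Proof.
rewrite /lbfgs_update !(ipDr, ipZr, ipNr) (ipC u y) (ipC u (B s)) (B_sym s u).
ring.
Qed.

Lemma lbfgs_update_psd : 0 < ip y s -> psd_op (lbfgs_update ip B s y).
Proof.
move=> ys0 u; rewrite lbfgs_updateE.
have CS := op_cauchy_schwarz B_linear B_sym B_psd s u.
rewrite (B_sym s u) (B_sym s s) (B_sym u u) in CS.
(* If <s, B s> = 0 the last term of the update vanishes, as x / 0 = 0. *)
have [sBs0|sBs_neq0] := eqVneq (ip s (B s)) 0.
  by rewrite sBs0 invr0 mulr0 subr0 addr_ge0 // divr_ge0 ?sqr_ge0 ?ltW.
have sBs_gt0 : 0 < ip s (B s) by rewrite lt_def sBs_neq0 B_psd.
rewrite addrAC; apply: addr_ge0; last by rewrite divr_ge0 ?sqr_ge0 ?ltW.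
by rewrite subr_ge0 ler_pdivrMr // mulrC.
Qed.

Lemma lbfgs_update_form_le (lam L cs : R) :
  (forall u, ip u (B u) <= lam * `|u| ^+ 2) -> 0 < cs ->
  cs * `|s| ^+ 2 < ip y s -> `|y| <= L * `|s| ->
  forall u, ip u (lbfgs_update ip B s y u) <= (lam + L ^+ 2 / cs) * `|u| ^+ 2.
Proof.
move=> Blam cs0 curv yL u; rewrite lbfgs_updateE mulrDl.
have ys0 : 0 < ip y s by apply: le_lt_trans curv; rewrite mulr_ge0 ?sqr_ge0 // ltW.
have sBu : 0 <= ip s (B u) ^+ 2 / ip s (B s) by rewrite divr_ge0 ?sqr_ge0.
have yu : `|ip y u| <= L * `|s| * `|u|.
  by rewrite (le_trans (normr_ip_le _ _)) // ler_wpM2r.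
have yu2 : ip y u ^+ 2 / ip y s <= L ^+ 2 / cs * `|u| ^+ 2.
  rewrite ler_pdivrMr // -real_normK ?num_real //.
  apply: le_trans (_ : (L * `|s| * `|u|) ^+ 2 <= _).
    by rewrite ler_pXn2r ?nnegrE // (le_trans _ yu).
  rewrite [X in X <= _](_ : _ = L ^+ 2 / cs * `|u| ^+ 2 * (cs * `|s| ^+ 2)).
    by apply: ler_wpM2l; [rewrite mulr_ge0 ?divr_ge0 ?sqr_ge0 // ltW | exact: ltW].
  by field; rewrite gt_eqF.
have := Blam u; lra.
Qed.

End LBFGSUpdate.

Lemma norm_rank1_sub_le (a b w : X) (r : R) :
  `|w - (r * ip a w) *: b| <= (1 + `|r| * `|a| * `|b|) * `|w|.
Proof.
rewrite (le_trans (ler_normB _ _)) // normrZ normrM mulrDl mul1r lerD2l.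
rewrite [X in _ <= X](_ : _ = `|r| * (`|a| * `|w|) * `|b|); last by ring.
by rewrite ler_wpM2r // ler_wpM2l // normr_ip_le.
Qed.

(* The inverse BFGS formula H+ = V^T H V + r s s^T, with V = I - r y s^T and
   r = 1 / <y, s>. *)
Definition lbfgs_inverse_update (H : X -> X) (s y : X) : X -> X :=
  let r := (ip y s)^-1 in
  fun w => let Hv := H (w - (r * ip s w) *: y) in
    Hv - (r * ip y Hv) *: s + (r * ip s w) *: s.

Lemma lbfgs_update_inverse (B H : X -> X) (s y : X) :
  is_linear_op B -> symmetric_op B -> psd_op B -> is_inverse B H ->
  0 < ip y s -> is_inverse (lbfgs_update ip B s y) (lbfgs_inverse_update H s y).
Proof.
move=> B_linear B_sym B_psd [BH HB] ys0.
have H_linear : is_linear_op H := inverse_linear B_linear (conj BH HB).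
have ys_neq0 : ip y s != 0 by rewrite gt_eqF.
have sBs_neq0 : ip s (B s) != 0.
  apply/eqP => sBs0; move: ys0.
  have Bs0 : B s = 0.
    apply/eqP; rewrite -normr_eq0 -sqrf_eq0 -ipvv -sqrf_eq0 eq_le sqr_ge0 andbT.
    have := op_cauchy_schwarz B_linear B_sym B_psd s (B s).
    by rewrite (ipC (B s) s) sBs0 mul0r.
  by rewrite -(HB s) Bs0 linop0 // ip0r ltxx.
split=> w; apply: ip_ext => t; rewrite /lbfgs_update /lbfgs_inverse_update /=.
- rewrite !(linopD B_linear, linopN B_linear, linopZ B_linear) !BH.
  rewrite !(ipDl, ipZl, ipNl, ipDr, ipZr, ipNr) (ipC s y).
  by field; rewrite ys_neq0 sBs_neq0.
- rewrite !(linopD H_linear, linopN H_linear, linopZ H_linear) !HB.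
  rewrite !(ipDl, ipZl, ipNl, ipDr, ipZr, ipNr) (ipC s y).
  by field; rewrite ys_neq0 sBs_neq0.
Qed.

Lemma lbfgs_inverse_update_norm_le (H : X -> X) (s y : X) (h L cs : R) :
  0 <= h -> (forall w, `|H w| <= h * `|w|) -> 0 <= L -> 0 < cs ->
  cs * `|s| ^+ 2 < ip y s -> `|y| <= L * `|s| ->
  forall w, `|lbfgs_inverse_update H s y w| <= (h * (1 + L / cs) ^+ 2 + cs^-1) * `|w|.
Proof.
move=> h0 Hh L0 cs0 curv yL w.
have ys0 : 0 < ip y s by apply: le_lt_trans curv; rewrite mulr_ge0 ?sqr_ge0 // ltW.
set r := (ip y s)^-1.
have r0 : 0 < r by rewrite invr_gt0.
set k := 1 + r * `|s| * `|y|.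
have k0 : 0 <= k by rewrite addr_ge0 // !mulr_ge0 // ltW.
have ssr : r * `|s| ^+ 2 <= cs^-1.
  by rewrite /r mulrC ler_pdivrMr // mulrC ler_pdivlMr // mulrC ltW.
have kL : k <= 1 + L / cs.
  rewrite lerD2l; apply: le_trans (_ : _ <= r * `|s| * (L * `|s|)) _.
    by apply: ler_wpM2l; rewrite ?mulr_ge0 // ltW.
  rewrite [X in X <= _](_ : _ = L * (r * `|s| ^+ 2)); last by ring.
  exact: ler_wpM2l.
have V_le v : `|v - (r * ip s v) *: y| <= k * `|v|.
  by rewrite (le_trans (norm_rank1_sub_le _ _ _ _)) // gtr0_norm.
have Vt_le v : `|v - (r * ip y v) *: s| <= k * `|v|.
  rewrite (le_trans (norm_rank1_sub_le _ _ _ _)) // gtr0_norm //.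
  by rewrite -mulrA (mulrC `|y|) mulrA.
rewrite /lbfgs_inverse_update /= -/r mulrDl.
apply: le_trans (ler_normD _ _) _; apply: lerD.
  apply: le_trans (Vt_le _) _; apply: le_trans (ler_wpM2l k0 (Hh _)) _.
  apply: le_trans (ler_wpM2l k0 (ler_wpM2l h0 (V_le w))) _.
  rewrite [X in X <= _](_ : _ = h * k ^+ 2 * `|w|); last by ring.
  by rewrite ler_wpM2r // ler_wpM2l // ler_pXn2r ?nnegrE // (le_trans k0).
rewrite normrZ normrM gtr0_norm //.
apply: le_trans (_ : r * (`|s| * `|w|) * `|s| <= _).
  by rewrite ler_wpM2r // ler_wpM2l ?normr_ip_le // ltW.
rewrite [X in X <= _](_ : _ = r * `|s| ^+ 2 * `|w|); last by ring.
by rewrite ler_wpM2r.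
Qed.

Definition spd_bounded (B : X -> X) (lam h : R) :=
  [/\ is_linear_op B, symmetric_op B, psd_op B,
      forall u, ip u (B u) <= lam * `|u| ^+ 2 &
      exists2 H, is_inverse B H & forall w, `|H w| <= h * `|w|].

Lemma spd_bounded_le B (lam h lam' h' : R) : spd_bounded B lam h ->
  lam <= lam' -> h <= h' -> spd_bounded B lam' h'.
Proof.
move=> [B_linear B_sym B_psd Blam [H BH Hh]] lam_le h_le; split=> //.
  by move=> u; rewrite (le_trans (Blam u)) // ler_wpM2r ?sqr_ge0.
by exists H => // w; rewrite (le_trans (Hh w)) // ler_wpM2r.
Qed.

Lemma spd_bounded_lbfgs_update B s y (lam h L cs : R) :
  0 <= h -> 0 <= L -> 0 < cs -> cs * `|s| ^+ 2 < ip y s -> `|y| <= L * `|s| ->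
  spd_bounded B lam h ->
  spd_bounded (lbfgs_update ip B s y) (lam + L ^+ 2 / cs)
    (h * (1 + L / cs) ^+ 2 + cs^-1).
Proof.
move=> h0 L0 cs0 curv yL [B_linear B_sym B_psd Blam [H BH Hh]].
have ys0 : 0 < ip y s by apply: le_lt_trans curv; rewrite mulr_ge0 ?sqr_ge0 // ltW.
split.
- exact: lbfgs_update_linear.
- exact: lbfgs_update_sym.
- exact: lbfgs_update_psd.
- exact: lbfgs_update_form_le.
- exists (lbfgs_inverse_update H s y); first exact: lbfgs_update_inverse.
  exact: lbfgs_inverse_update_norm_le.
Qed.

Definition lbfgs_step (acc : pred nat) (s y : nat -> X) (B : X -> X) (j : nat) :=
  if acc j then lbfgs_update ip B (s j) (y j) else B.

Lemma lbfgs_steps_psd (acc : pred nat) (s y : nat -> X) (js : seq nat) B :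
  (forall j, acc j -> 0 < ip (y j) (s j)) ->
  [/\ is_linear_op B, symmetric_op B & psd_op B] ->
  let B' := foldl (lbfgs_step acc s y) B js in
  [/\ is_linear_op B', symmetric_op B' & psd_op B'].
Proof.
move=> curv; elim: js B => [|j js IH] B //= [B_linear B_sym B_psd]; apply: IH.
rewrite /lbfgs_step; case: ifP => // accj; split.
- exact: lbfgs_update_linear.
- exact: lbfgs_update_sym.
- exact/lbfgs_update_psd/curv.
Qed.

Lemma spd_bounded_lbfgs_steps (acc : pred nat) (s y : nat -> X) (js : seq nat)
    B (lam h L cs : R) :
  0 <= h -> 0 <= L -> 0 < cs ->
  (forall j, j \in js -> acc j ->
     cs * `|s j| ^+ 2 < ip (y j) (s j) /\ `|y j| <= L * `|s j|) ->
  spd_bounded B lam h ->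
  spd_bounded (foldl (lbfgs_step acc s y) B js)
    (lam + (size js)%:R * (L ^+ 2 / cs))
    (((1 + L / cs) ^+ 2) ^+ size js * (h + (size js)%:R / cs)).
Proof.
move=> h0 L0 cs0; elim: js B lam h h0 => [|j js IH] B lam h h0 /= pairs B_bd.
  by rewrite !mul0r !addr0 expr0 mul1r.
set A := (1 + L / cs) ^+ 2; set n : R := (size js)%:R.
have A1 : 1 <= A by rewrite exprn_ege1 // lerDl divr_ge0 // ltW.
have E0 : 0 <= L ^+ 2 / cs by rewrite divr_ge0 ?sqr_ge0 // ltW.
have h'0 : 0 <= h * A + cs^-1.
  by apply: addr_ge0; [rewrite mulr_ge0 // (le_trans ler01) | rewrite invr_ge0 ltW].
have step : spd_bounded (lbfgs_step acc s y B j) (lam + L ^+ 2 / cs) (h * A + cs^-1).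
  rewrite /lbfgs_step; case: ifP => accj.
    have [curv yL] := pairs j (mem_head _ _) accj.
    exact: spd_bounded_lbfgs_update.
  apply: spd_bounded_le B_bd _ _; first by rewrite lerDl.
  by rewrite (le_trans (ler_peMr h0 A1)) // lerDl invr_ge0 ltW.
have pairs' j' : j' \in js -> acc j' ->
    cs * `|s j'| ^+ 2 < ip (y j') (s j') /\ `|y j'| <= L * `|s j'|.
  by move=> j'js; apply: pairs; rewrite in_cons j'js orbT.
apply: spd_bounded_le (IH _ _ _ h'0 pairs' step) _ _; rewrite -/n -/A.
  by rewrite mulrSr; lra.
rewrite exprSr -mulrA; apply: ler_wpM2l.
  by rewrite exprn_ge0 // (le_trans ler01 A1).
rewrite mulrDr (mulrC A h) -addrA lerD2l mulrSr.
rewrite (_ : _ + _ = (n + 1) / cs); last by ring.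
by rewrite ler_peMl // divr_ge0 ?addr_ge0 // ltW.
Qed.

Lemma form_ratio_le (q : X -> X -> R) (M : R) (s z : X) :
  (forall a u v w, q (a *: u + v) w = a * q u w + q v w) ->
  (forall u v, q u v = q v u) -> (forall u, 0 <= q u u) ->
  (forall u, q u u <= M * `|u| ^+ 2) -> (forall u, q u s = ip u z) ->
  0 < ip z s -> `|z| ^+ 2 / ip z s <= M.
Proof.
move=> qDZl qC q_ge0 qM qs zs0.
have z_neq0 : z != 0 by apply: contraTneq zs0 => ->; rewrite ip0l ltxx.
have z2 : 0 < `|z| ^+ 2 by rewrite exprn_gt0 // normr_gt0.
have := @form_cauchy_schwarz R X q qDZl qC q_ge0 z s.
rewrite !qs ipvv ipC => CS.
rewrite ler_pdivrMr // -(ler_pM2l z2) -expr2 (le_trans CS) //.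
by rewrite mulrCA mulrA ler_wpM2r ?qM // ltW.
Qed.

End InnerProductSpace.

Section GradientAlongSegment.
Variables (R : realType) (X : completeNormedModType R) (ip : X -> X -> R).
Hypothesis ip_inner : is_inner_product ip.
Variable g : X -> X.
Hypothesis g_C2 : C2 g.
Variable u : X.

Definition ip_left : X -> R^o := ip u.

Lemma ip_left_linear : linear ip_left.
Proof. by move=> a v w; rewrite /ip_left (ipDr ip_inner) (ipZr ip_inner). Qed.

HB.instance Definition _ := GRing.isLinear.Build R X R^o _ ip_left ip_left_linear.

Lemma ip_left_continuous : continuous ip_left.
Proof.
apply/bounded_linear_continuous/bounded_funP => r.
exists (`|u| * r) => v vr.
by rewrite (le_trans (normr_ip_le ip_inner _ _)) // ler_wpM2l.
Qed.

Lemma ip_dg_continuous (p s v : X) :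
  continuous (fun t : R => ip u ('d g (p + t *: s) v)).
Proof.
move=> t0; apply/cvgrPdist_lt => e e0.
pose K := `|u| * `|v| + 1.
have K0 : 0 < K by rewrite ltr_wpDl ?mulr_ge0.
have [r r0 dg_r] := g_C2.2 (p + t0 *: s) (e / K) (divr_gt0 e0 K0).
have rs0 : 0 < r / (`|s| + 1) by rewrite divr_gt0 ?ltr_wpDl.
near=> t.
have t0t : `|t0 - t| < r / (`|s| + 1) by near: t; apply: cvgr_dist_lt.
have pts : `|(p + t *: s) - (p + t0 *: s)| < r.
  rewrite opprD addrACA subrr add0r -scalerBl normrZ distrC.
  apply: le_lt_trans (_ : _ <= `|t0 - t| * (`|s| + 1)) _.
    by rewrite ler_wpM2l // lerDl.
  by rewrite -ltr_pdivlMr ?ltr_wpDl.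
have dg_lin : is_linear_op (fun w => 'd g (p + t *: s) w - 'd g (p + t0 *: s) w).
  by move=> a v1 v2; rewrite !linearP /= scalerBr addrACA scalerN.
have dgv := norm_le_of_opnorm dg_lin (dg_r _ pts) v.
rewrite distrC -(ipNr ip_inner) -(ipDr ip_inner).
rewrite (le_lt_trans (normr_ip_le ip_inner _ _)) // (le_lt_trans (ler_wpM2l _ dgv)) //.
rewrite [X in X < _](_ : _ = e * (`|u| * `|v| / K)); last by ring.
by rewrite gtr_pMr // ltr_pdivrMr // mul1r ltrDl.
Unshelve. all: by end_near.
Qed.

Lemma ip_g_line_diff (p s : X) (t : R) :
  differentiable (fun r : R => ip_left (g (p + r *: s))) t /\
  'd (fun r : R => ip_left (g (p + r *: s))) t 1 = ip u ('d g (p + t *: s) s).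
Proof.
pose h r : X := p + r *: s.
have dh : 'd h t = (fun r : R => r *: s) :> (R -> X) by rewrite /h diff_val // add0r.
have dgh : differentiable (g \o h) t by apply: differentiable_comp => //; apply: g_C2.1.
have dip w : differentiable ip_left w.
  exact/linear_differentiable/ip_left_continuous.
split; first exact: (@differentiable_comp _ _ _ _ (g \o h) ip_left).
rewrite (@diff_comp _ _ _ _ (g \o h) ip_left) // diff_lin.
  by rewrite /= diff_comp //= ?dh ?scale1r //; apply: g_C2.1.
exact: ip_left_continuous.
Qed.

Lemma Rintegral_ip_dg (p s : X) :
  Rintegral lebesgue_measure `[0%R, 1%R] (fun t => ip u ('d g (p + t *: s) s))
  = ip u (g (p + s)) - ip u (g p).
Proof.
rewrite /Rintegral (@continuous_FTC2 _ _ (fun r : R => ip_left (g (p + r *: s)))).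
- by rewrite -EFinD /= /ip_left scale1r scale0r addr0.
- by [].
- exact/continuous_subspaceT/ip_dg_continuous.
- split.
  + by move=> r _; apply/derivable1_diffP; exact: (ip_g_line_diff p s r).1.
  + exact/cvg_at_right_filter/(differentiable_continuous (ip_g_line_diff p s 0).1).
  + exact/cvg_at_left_filter/(differentiable_continuous (ip_g_line_diff p s 1).1).
- move=> r _; rewrite derive1E deriveE; last exact: (ip_g_line_diff p s r).1.
  exact: (ip_g_line_diff p s r).2.
Qed.

End GradientAlongSegment.

Lemma Rintegral_ip_dgDZl (R : realType) (X : completeNormedModType R)
    (ip : X -> X -> R) (g : X -> X) (p s v : X) (a : R) (u1 u2 : X) :
  is_inner_product ip -> C2 g ->
  Rintegral lebesgue_measure `[0%R, 1%R]
    (fun t => ip (a *: u1 + u2) ('d g (p + t *: s) v)) =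
  a * Rintegral lebesgue_measure `[0%R, 1%R] (fun t => ip u1 ('d g (p + t *: s) v))
  + Rintegral lebesgue_measure `[0%R, 1%R] (fun t => ip u2 ('d g (p + t *: s) v)).
Proof.
move=> ip_inner g_C2.
have integrable w : lebesgue_measure.-integrable `[0%R, 1%R]
    (EFin \o (fun t => ip w ('d g (p + t *: s) v))).
  apply: continuous_compact_integrable; first exact: segment_compact.
  exact/continuous_subspaceT/ip_dg_continuous.
under eq_Rintegral do rewrite (ipDl ip_inner) (ipZl ip_inner).
rewrite RintegralD //; first by rewrite RintegralZl.
have -> : (fun t => a * ip u1 ('d g (p + t *: s) v)) =
          (fun t => ip (a *: u1) ('d g (p + t *: s) v)).
  by apply: funext => t; rewrite (ipZl ip_inner).
exact: integrable.
Qed.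

Section GbarForm.
Variables (R : realType) (X : completeNormedModType R) (ip : X -> X -> R)
  (g : X -> X) (x : nat -> X) (S : nat -> X -> X) (k : nat).
Hypotheses (ip_inner : is_inner_product ip) (g_C2 : C2 g).

Lemma Gbar_formDZl a u1 u2 v : Gbar_form ip g x S k (a *: u1 + u2) v =
  a * Gbar_form ip g x S k u1 v + Gbar_form ip g x S k u2 v.
Proof.
by rewrite /Gbar_form Rintegral_ip_dgDZl // (ipDl ip_inner) (ipZl ip_inner); ring.
Qed.

Lemma Gbar_form_step u :
  Gbar_form ip g x S k u (s_ x k) = ip u (y_ g x k - S k.+1 (s_ x k)).
Proof.
rewrite /Gbar_form Rintegral_ip_dg //.
have -> : x k + s_ x k = x k.+1 by rewrite /s_ addrC subrK.
by rewrite !(ipDr ip_inner) !(ipNr ip_inner).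
Qed.

End GbarForm.

Lemma Pproj_ge_lower (R : realType) (wl : R) (wu : \bar R) t :
  (wl%:E <= wu)%E -> (wl%:E <= Pproj wl wu t)%E.
Proof. by move=> wlu; rewrite /Pproj le_min wlu andbT lee_fin le_max lexx orbT. Qed.

Lemma Pproj_le_upper (R : realType) (wl : R) (wu : \bar R) t : (Pproj wl wu t <= wu)%E.
Proof. by rewrite /Pproj ge_min lexx orbT. Qed.

Lemma Pproj_le_max (R : realType) (wl : R) (wu : \bar R) t :
  (Pproj wl wu t <= (Num.max t wl)%:E)%E.
Proof. by rewrite /Pproj ge_min lexx. Qed.

Section SLBFGSIterates.
Variables (R : realType) (X : completeNormedModType R) (ip : X -> X -> R)
  (J : X -> R) (g : X -> X) (x0 : X) (eps : R) (l : nat) (c0 : R)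
  (C0 : \bar R) (cs c1 c2 : R) (use_g : bool) (L m : R)
  (x d : nat -> X) (Sop : nat -> X -> X) (tau : nat -> R).

Local Notation run := (running g x eps).
Local Notation s := (s_ x).
Local Notation y := (y_ g x).
Local Notation B := (Bk ip g x cs l Sop tau).
Local Notation B0 := (B0_ Sop tau).

Hypotheses (ip_inner : is_inner_product ip) (eps_ge0 : 0 <= eps)
  (c0_ge0 : 0 <= c0) (c0_le_C0 : (c0%:E <= C0)%E) (cs_gt0 : 0 < cs)
  (c1_gt0 : 0 < c1) (tau0_gt0 : 0 < tau 0) (x_0 : x 0%N = x0).
Hypotheses
  (S_spd : forall k, run k -> sym_psd_bounded ip (Sop k))
  (S_le : forall k, run k -> (opnorm (Sop k) <= m%:E)%E)
  (B_d : forall k, run k -> B k (d k) = - g (x k))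
  (tau_admissible : forall k, run k.+1 ->
     tau_rule ip g x c0 C0 c1 c2 use_g Sop tau k)
  (L_gt0 : 0 < L)
  (g_lipschitz : forall u v, Omega J x0 u -> Omega J x0 v ->
     `|g u - g v| <= L * `|u - v|)
  (sufficient_decrease : forall k, run k ->
     exists2 t : R, 0 <= t & J (x k.+1) <= J (x k) + t * ip (g (x k)) (d k))
  (B0_inverse_bounded : c0 = 0 -> exists M : R, forall k, run k ->
     exists2 B0inv : X -> X, is_inverse (B0 k) B0inv & (opnorm B0inv <= M%:E)%E)
  (Gbar_bounded : C0 = +oo%E -> use_g \/
     (C2 g /\
      (forall k, run k.+1 -> forall u v,
         Gbar_form ip g x Sop k u v = Gbar_form ip g x Sop k v u /\
         0 <= Gbar_form ip g x Sop k u u) /\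
      (exists M : R, forall k, run k.+1 -> forall u v,
         `|Gbar_form ip g x Sop k u v| <= M * `|u| * `|v|))).

Let ipC := ipC ip_inner.
Let ipvv := ipvv ip_inner.
Let ipDl := ipDl ip_inner.
Let ipDr := ipDr ip_inner.
Let ipZl := ipZl ip_inner.
Let ipZr := ipZr ip_inner.
Let ipNl := ipNl ip_inner.

Lemma running0 : run 0.
Proof. by []. Qed.

Lemma running_le k j : run k -> (j <= k)%N -> run j.
Proof. by move=> xk jk i ij; apply: xk; apply: leq_trans ij jk. Qed.

Lemma m_ge0 : 0 <= m.
Proof. by rewrite -lee_fin (le_trans (opnorm_ge0 (Sop 0))) // S_le // running0. Qed.

Lemma S_bounds k : run k -> [/\ is_linear_op (Sop k), symmetric_op ip (Sop k),
  psd_op ip (Sop k) & forall u, `|Sop k u| <= m * `|u|].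
Proof.
move=> xk; have [S_linear S_sym S_psd _] := S_spd xk; split=> //.
exact/norm_le_of_opnorm/S_le.
Qed.

Lemma B0_coercive k : run k -> forall u, tau k * `|u| ^+ 2 <= ip u (B0 k u).
Proof.
by move=> xk u; have [_ _ S_psd _] := S_bounds xk; rewrite ipDr ipZr ipvv lerDl.
Qed.

Lemma B0_form_le k : run k -> forall u, ip u (B0 k u) <= (tau k + m) * `|u| ^+ 2.
Proof.
move=> xk u; have [_ _ _ Sm] := S_bounds xk.
rewrite ipDr ipZr ipvv mulrDl lerD2l (le_trans (ler_norm _)) //.
by rewrite (le_trans (normr_ip_le ip_inner _ _)) // expr2 mulrCA ler_wpM2l.
Qed.

Lemma B0_linear_sym k : run k -> is_linear_op (B0 k) /\ symmetric_op ip (B0 k).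
Proof.
move=> xk; have [S_linear S_sym _ _] := S_bounds xk; split.
  by move=> a u v; rewrite /B0_ S_linear !scalerDr scalerA mulrC -scalerA addrACA.
by move=> u v; rewrite /B0_ ipDl ipDr ipZl ipZr S_sym.
Qed.

Definition grad_factor k := Num.max 1 (`|g (x k)| `^ (- c2)).

Lemma grad_factor_ge1 k : 1 <= grad_factor k.
Proof. by rewrite /grad_factor le_max lexx. Qed.

Lemma grad_factor_ge0 k : 0 <= grad_factor k.
Proof. exact: le_trans ler01 (grad_factor_ge1 k). Qed.

Lemma le_mul_grad_factor k (a : R) : 0 <= a -> a <= a * grad_factor k.
Proof. by move=> a0; rewrite ler_peMr ?grad_factor_ge1. Qed.

Lemma grad_gt0 k : run k.+1 -> 0 < `|g (x k.+1)|.
Proof. by move=> xk; apply: le_lt_trans eps_ge0 (xk k (ltnSn k)). Qed.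

Lemma inv_omega_le k : run k.+1 ->
  (c1 * `|g (x k.+1)| `^ c2)^-1 <= c1^-1 * grad_factor k.+1.
Proof.
move=> xk; rewrite invfM -powRN; apply: ler_wpM2l; first by rewrite invr_ge0 ltW.
by rewrite le_max lexx orbT.
Qed.

Lemma tau_rule_bounds k : run k.+1 ->
  let gam := c1 * `|g (x k.+1)| `^ c2 in
  let z := y k - Sop k.+1 (s k) in let rho := ip z (s k) in
  [/\ Num.min c0 gam <= tau k.+1, ((tau k.+1)%:E <= Order.max C0 gam^-1%:E)%E &
      tau k.+1 <= Num.max (if (0 < rho) && ~~ use_g then `|z| ^+ 2 / rho
                           else `|z| / `|s k|) (Num.min c0 gam)].
Proof.
move=> xk gam z rho.
have omega_le : ((Num.min c0 gam)%:E <= Order.max C0 gam^-1%:E)%E.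
  apply: (@le_trans _ _ c0%:E); first by rewrite lee_fin ge_min lexx.
  by rewrite le_max c0_le_C0.
have := tau_admissible xk; rewrite /tau_rule -/gam -/z -/rho.
case: ifP => _ /andP[lo up]; split; rewrite -?lee_fin.
all: by [apply: le_trans (Pproj_ge_lower _ omega_le) lo
        | apply: le_trans up (Pproj_le_upper _ _ _)
        | apply: le_trans up (Pproj_le_max _ _ _)].
Qed.

Lemma tau_ge0 k : run k -> 0 <= tau k.
Proof.
case: k => [_|k xk]; first exact: ltW.
have [lo _ _] := tau_rule_bounds xk; apply: le_trans lo.
by rewrite le_min c0_ge0 mulr_ge0 ?powR_ge0 // ltW.
Qed.

Lemma B0_psd k : run k -> psd_op ip (B0 k).
Proof.
move=> xk u; apply: le_trans (B0_coercive xk u).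
by rewrite mulr_ge0 ?sqr_ge0 ?tau_ge0.
Qed.

Lemma Bk_foldE k : B k =
  foldl (lbfgs_step ip (accepted ip g x cs) s y) (B0 k) (iota (k - l) (k - (k - l))).
Proof. by []. Qed.

Lemma Bk_psd k : run k ->
  [/\ is_linear_op (B k), symmetric_op ip (B k) & psd_op ip (B k)].
Proof.
move=> xk; have [B0_linear B0_sym] := B0_linear_sym xk.
rewrite Bk_foldE; apply: lbfgs_steps_psd => //; last by split=> //; apply: B0_psd.
by move=> j; rewrite /accepted; apply: le_lt_trans; rewrite mulr_ge0 ?sqr_ge0 // ltW.
Qed.

Lemma J_decreasing k : run k -> J (x k.+1) <= J (x k).
Proof.
move=> xk; have [t t0 decr] := sufficient_decrease xk.
have [_ _ B_psd] := Bk_psd xk.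
rewrite (le_trans decr) // gerDl mulr_ge0_le0 //.
by rewrite -oppr_ge0 -ipNl -B_d // ipC B_psd.
Qed.

Lemma iterates_in_Omega k j : run k -> (j <= k)%N -> Omega J x0 (x j).
Proof.
move=> xk; elim: j => [|j IH] jk; first by rewrite /Omega /= x_0.
apply: le_trans (IH (ltnW jk)); rewrite J_decreasing //.
exact: running_le xk (ltnW jk).
Qed.

Lemma y_lipschitz k j : run k -> (j < k)%N -> `|y j| <= L * `|s j|.
Proof.
move=> xk jk; apply: g_lipschitz; apply: iterates_in_Omega xk _ => //.
exact: ltnW.
Qed.

Lemma tau_z_bounded : C0 = +oo%E -> exists M : R, forall k, run k.+1 -> ~~ use_g ->
  let z := y k - Sop k.+1 (s k) in 0 < ip z (s k) -> `|z| ^+ 2 / ip z (s k) <= M.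
Proof.
case/Gbar_bounded => [-> | [g_C2 [G_spd [M G_le]]]]; first by exists 0.
exists M => k xk _ z zs0.
have G_sym u v := (G_spd k xk u v).1.
have G_ge0 u := (G_spd k xk u u).2.
have G_lin := @Gbar_formDZl R X ip g x Sop k ip_inner g_C2.
apply: (form_ratio_le ip_inner G_lin G_sym G_ge0) => //.
  by move=> u; rewrite (le_trans (ler_norm _)) // expr2 mulrA G_le.
exact: Gbar_form_step.
Qed.

Lemma norm_z_div_s_le k : run k.+1 -> `|y k - Sop k.+1 (s k)| / `|s k| <= L + m.
Proof.
move=> xk; have [_ _ _ Sm] := S_bounds xk.
have Lm_ge0 : 0 <= L + m by rewrite addr_ge0 ?m_ge0 // ltW.
have [-> | s_neq0] := eqVneq (s k) 0; first by rewrite normr0 invr0 mulr0.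
rewrite ler_pdivrMr ?normr_gt0 // mulrDl (le_trans (ler_normB _ _)) //.
by rewrite lerD // (y_lipschitz xk).
Qed.

Lemma tau_succ_le_grad_factor :
  exists2 K : R, 0 <= K & forall k, run k.+1 -> tau k.+1 <= K * grad_factor k.+1.
Proof.
have c1V_ge0 : 0 <= c1^-1 by rewrite invr_ge0 ltW.
case C0E : C0 => [r | | ]; last by move: c0_le_C0; rewrite C0E.
  exists (`|r| + c1^-1); first by rewrite addr_ge0.
  move=> k xk; have [_ + _] := tau_rule_bounds xk.
  rewrite C0E -EFin_max lee_fin => /le_trans; apply.
  rewrite ge_max mulrDl; apply/andP; split.
    have r_le := le_trans (ler_norm r) (le_mul_grad_factor k.+1 (normr_ge0 r)).
    by rewrite (le_trans r_le) // lerDl mulr_ge0 ?grad_factor_ge0.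
  by rewrite (le_trans (inv_omega_le xk)) // lerDr mulr_ge0 ?grad_factor_ge0.
have [M tauzM] := tau_z_bounded C0E.
pose K := `|M| + (L + m) + c0.
have [M_le Lm_le c0_le] : [/\ M <= K, L + m <= K & c0 <= K].
  have := ler_norm M; have := normr_ge0 M; have := m_ge0; have := L_gt0.
  by have := c0_ge0; rewrite /K; split; lra.
have K0 : 0 <= K := le_trans c0_ge0 c0_le.
exists K => // k xk; have [_ _ +] := tau_rule_bounds xk.
move=> /le_trans; apply; rewrite (le_trans _ (le_mul_grad_factor _ K0)) //.
rewrite ge_max ge_min c0_le andbT.
case: ifP => [/andP[zs0 not_g] | _]; first exact: le_trans (tauzM _ xk not_g zs0) M_le.
exact: le_trans (norm_z_div_s_le xk) Lm_le.
Qed.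

Lemma tau_le_grad_factor :
  exists2 K : R, 0 <= K & forall k, run k -> tau k <= K * grad_factor k.
Proof.
have [K K0 tauK] := tau_succ_le_grad_factor.
exists (tau 0 + K) => [|[_ | k xk]]; first by rewrite addr_ge0 // ltW.
  apply: le_trans (le_mul_grad_factor 0 (ltW tau0_gt0)) _.
  by apply: ler_wpM2r; rewrite ?grad_factor_ge0 // lerDl.
apply: le_trans (tauK _ xk) _.
by apply: ler_wpM2r; rewrite ?grad_factor_ge0 // lerDr ltW.
Qed.

Lemma B0_invertible k : run k -> 0 < tau k ->
  exists2 H, is_inverse (B0 k) H & forall w, `|H w| <= (tau k)^-1 * `|w|.
Proof.
move=> xk tau_gt0; have [B0_linear B0_sym] := B0_linear_sym xk.
by have := coercive_invertible ip_inner B0_linear B0_sym tau_gt0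
  (B0_coercive xk) (B0_form_le xk).
Qed.

Lemma B0_inverse_succ_le_grad_factor : exists2 K : R, 0 <= K & forall k, run k.+1 ->
  exists2 H, is_inverse (B0 k.+1) H & forall w, `|H w| <= K * grad_factor k.+1 * `|w|.
Proof.
have [c0_eq0 | c0_neq0] := eqVneq c0 0.
  have [M HM] := B0_inverse_bounded c0_eq0.
  have M0 : 0 <= M.
    by have [H _ H_le] := HM 0 running0; rewrite -lee_fin (le_trans (opnorm_ge0 H)).
  exists M => // k xk; have [H BH H_le] := HM _ xk; exists H => // w.
  have H_linear := inverse_linear (B0_linear_sym xk).1 BH.
  apply: le_trans (norm_le_of_opnorm H_linear H_le w) (ler_wpM2r (normr_ge0 _) _).
  exact: le_mul_grad_factor.
have c0_gt0 : 0 < c0 by rewrite lt_def c0_neq0.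
have c1V_ge0 : 0 <= c1^-1 by rewrite invr_ge0 ltW.
exists (c0^-1 + c1^-1); first by rewrite addr_ge0 // invr_ge0 ltW.
move=> k xk; have [lo _ _] := tau_rule_bounds xk.
set gam := c1 * _ in lo.
have gam_gt0 : 0 < gam by rewrite mulr_gt0 // powR_gt0 // grad_gt0.
have omega_gt0 : 0 < Num.min c0 gam by rewrite lt_min c0_gt0.
have tau_gt0 := lt_le_trans omega_gt0 lo.
have [H BH H_le] := B0_invertible xk tau_gt0.
exists H => // w; rewrite (le_trans (H_le w)) // ler_wpM2r //.
have tauV_le : (tau k.+1)^-1 <= (Num.min c0 gam)^-1 by rewrite lef_pV2 ?posrE.
rewrite (le_trans tauV_le) //.
apply: (@le_trans _ _ (c0^-1 + gam^-1)).
  by rewrite /Num.min; case: ifP => _; rewrite ?lerDl ?lerDr invr_ge0 ltW.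
rewrite mulrDl; apply: lerD; last exact: inv_omega_le.
by rewrite le_mul_grad_factor // invr_ge0 ltW.
Qed.

Lemma B0_spd_bounded : exists2 K : R, 0 <= K & forall k, run k ->
  spd_bounded ip (B0 k) (K * grad_factor k) (K * grad_factor k).
Proof.
have [K1 K1_ge0 tau_le] := tau_le_grad_factor.
have [K2 K2_ge0 B0_inv] := B0_inverse_succ_le_grad_factor.
have tau0V_ge0 : 0 <= (tau 0)^-1 by rewrite invr_ge0 ltW.
pose K3 := (tau 0)^-1 + K2.
have [K3_ge0 K3_le] : 0 <= K3 /\ K3 <= K1 + m + K3.
  by have := m_ge0; rewrite /K3; split; lra.
exists (K1 + m + K3); first exact: le_trans K3_ge0 K3_le.
move=> k xk; have [B0_linear B0_sym] := B0_linear_sym xk.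
have P_ge0 := grad_factor_ge0 k.
have [H BH H_le] : exists2 H, is_inverse (B0 k) H &
    forall w, `|H w| <= K3 * grad_factor k * `|w|.
  case: k xk {B0_linear B0_sym P_ge0} => [x0r | k xk].
    have [H BH H_le] := B0_invertible x0r tau0_gt0; exists H => // w.
    apply: le_trans (H_le w) (ler_wpM2r (normr_ge0 _) _).
    apply: le_trans (le_mul_grad_factor 0 tau0V_ge0) (ler_wpM2r (grad_factor_ge0 _) _).
    by rewrite lerDl.
  have [H BH H_le] := B0_inv k xk; exists H => // w.
  apply: le_trans (H_le w) (ler_wpM2r (normr_ge0 _) (ler_wpM2r (grad_factor_ge0 _) _)).
  by rewrite lerDr.
split=> //; first exact: B0_psd.
  move=> u; apply: le_trans (B0_form_le xk u) (ler_wpM2r (sqr_ge0 _) _).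
  rewrite (le_trans (lerD (tau_le k xk) (le_mul_grad_factor k m_ge0))) //.
  by rewrite -mulrDl ler_wpM2r // lerDl.
exists H => // w; apply: le_trans (H_le w) (ler_wpM2r (normr_ge0 _) _).
exact: ler_wpM2r.
Qed.

Lemma Bk_spd_bounded : exists2 K : R, 0 <= K &
  forall k, run k -> spd_bounded ip (B k) (K * grad_factor k) (K * grad_factor k).
Proof.
have [K0 K0_ge0 B0_bd] := B0_spd_bounded.
set E := L ^+ 2 / cs; set A := (1 + L / cs) ^+ 2.
have E_ge0 : 0 <= E by rewrite divr_ge0 ?sqr_ge0 // ltW.
have A_ge1 : 1 <= A by rewrite exprn_ege1 // lerDl divr_ge0 // ltW.
have lE_ge0 : 0 <= l%:R * E := mulr_ge0 (ler0n R l) E_ge0.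
have lcs_ge0 : 0 <= l%:R / cs :> R by rewrite divr_ge0 // ltW.
have Al_ge0 : 0 <= A ^+ l * (K0 + l%:R / cs).
  by rewrite mulr_ge0 ?addr_ge0 // exprn_ge0 // (le_trans ler01).
exists (K0 + l%:R * E + A ^+ l * (K0 + l%:R / cs)); first by lra.
move=> k xk; set P := grad_factor k; have P_ge1 : 1 <= P := grad_factor_ge1 k.
have P_ge0 : 0 <= P := grad_factor_ge0 k.
pose n := (k - (k - l))%N; have n_le : (n <= l)%N by rewrite /n -minnE geq_minr.
have nR_le : n%:R <= l%:R :> R by rewrite ler_nat.
have pairs j : j \in iota (k - l) n -> accepted ip g x cs j ->
    cs * `|s j| ^+ 2 < ip (y j) (s j) /\ `|y j| <= L * `|s j|.
  rewrite mem_iota /n subnKC ?leq_subr // => /andP[_ jk] curv.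
  by split=> //; apply: y_lipschitz xk jk.
have := spd_bounded_lbfgs_steps ip_inner (mulr_ge0 K0_ge0 P_ge0) (ltW L_gt0) cs_gt0
  pairs (B0_bd k xk).
rewrite -Bk_foldE size_iota -/n -/E -/A -/P => /spd_bounded_le; apply.
  have : n%:R * E <= l%:R * E * P.
    exact: le_trans (ler_wpM2r E_ge0 nR_le) (ler_peMr lE_ge0 P_ge1).
  by have := mulr_ge0 Al_ge0 P_ge0; rewrite -/P !mulrDl; lra.
have An_le : A ^+ n * (K0 * P + n%:R / cs) <= A ^+ l * (K0 + l%:R / cs) * P.
  rewrite -mulrA; apply: ler_pM.
  - by rewrite exprn_ge0 // (le_trans ler01 A_ge1).
  - by apply: addr_ge0; [exact: mulr_ge0 | rewrite divr_ge0 // ltW].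
  - exact: ler_weXn2l.
  rewrite mulrDl lerD2l (le_trans _ (ler_peMr lcs_ge0 P_ge1)) //.
  by apply: ler_wpM2r nR_le; rewrite invr_ge0 ltW.
by have := mulr_ge0 K0_ge0 P_ge0; have := mulr_ge0 lE_ge0 P_ge0; rewrite !mulrDl; lra.
Qed.

Lemma Bk_opnorm_le : exists2 C : R, 0 < C & forall k, run k ->
  exists2 Binv, is_inverse (B k) Binv &
    (opnorm (B k) + opnorm Binv <= (C * grad_factor k)%:E)%E.
Proof.
have [K K0 B_bd] := Bk_spd_bounded.
exists (K + K + 1) => [|k xk]; first by rewrite ltr_wpDl ?addr_ge0.
have [B_linear B_sym B_psd B_form [H BH H_le]] := B_bd k xk.
have KP_ge0 : 0 <= K * grad_factor k by rewrite mulr_ge0 ?grad_factor_ge0.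
have B_le := opnorm_le_of_norm KP_ge0
  (norm_le_of_form ip_inner B_linear B_sym B_psd B_form).
exists H => //; rewrite (le_trans (leeD B_le (opnorm_le_of_norm KP_ge0 H_le))) //.
by rewrite -EFinD lee_fin -mulrDl ler_wpM2r ?lerDl ?grad_factor_ge0.
Qed.

End SLBFGSIterates.

Lemma armijo_sufficient_decrease (R : realType) (X : completeNormedModType R)
    (ip : X -> X -> R) (J : X -> R) (g : X -> X) (sigma a : R) (xk dk : X) :
  0 <= sigma -> 0 <= a -> armijo ip J g sigma xk dk a ->
  exists2 t : R, 0 <= t & J (xk + a *: dk) <= J xk + t * ip (g xk) dk.
Proof. by move=> sigma0 a0 arm; exists (a * sigma); rewrite ?mulr_ge0. Qed.

Theorem lemma4p6 (R : realType) (X : completeNormedModType R)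
  (ip : X -> X -> R) (J : X -> R) (g : X -> X)
  (x0 : X) (eps : R) (l : nat) (c0 : R) (C0 : \bar R) (cs c1 c2 : R)
  (use_g : bool) (beta sigma eta L : R)
  (x d : nat -> X) (alpha : nat -> R) (Sop : nat -> X -> X) (tau : nat -> R) :
  (* X is a real Hilbert space with inner product ip *)
  is_inner_product ip ->
  (* parameters of Algorithm SLBFGS *)
  0 <= eps -> 0 <= c0 -> (c0%:E <= C0)%E -> 0 < cs -> 0 < c1 -> 0 < c2 ->
  0 < tau 0 -> x 0%N = x0 ->
  (* the iterations of Algorithm SLBFGS (as long as it has not stopped) *)
  (forall k, running g x eps k -> sym_psd_bounded ip (Sop k)) ->
  (forall k, running g x eps k ->
     Bk ip g x cs l Sop tau k (d k) = - g (x k)) ->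
  (forall k, running g x eps k -> x k.+1 = x k + alpha k *: d k) ->
  (forall k, running g x eps k.+1 ->
     tau_rule ip g x c0 C0 c1 c2 use_g Sop tau k) ->
  (* the variant [tau^s, tau^g] is only used together with C0 = oo *)
  (use_g -> C0 = +oo%E) ->
  (* assumption 1 *)
  C1_with_gradient ip J g -> (exists m : R, forall u, m <= J u) ->
  (* assumption 2 *)
  0 < L ->
  (forall u v, Omega J x0 u -> Omega J x0 v -> `|g u - g v| <= L * `|u - v|) ->
  (* assumption 3 *)
  (exists M : R, forall k, running g x eps k -> (opnorm (Sop k) <= M%:E)%E) ->
  (* assumption 4 *)
  ((0 < beta < 1 /\ 0 < sigma < 1 /\
    (forall k, running g x eps k ->
       armijo_backtracking ip J g beta sigma (x k) (d k) (alpha k)) /\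
    exists2 delta : R, 0 < delta &
      (unif_cont_on (Omega_delta J x0 delta) J \/
       unif_cont_on (Omega_delta J x0 delta) g))
   \/
   (0 < sigma < eta /\ eta < 1 /\
    (forall k, running g x eps k ->
       wolfe_powell ip J g sigma eta (x k) (d k) (alpha k)))) ->
  (* assumption 5 *)
  (c0 = 0 -> exists M : R, forall k, running g x eps k ->
     exists2 B0inv : X -> X, is_inverse (B0_ Sop tau k) B0inv &
       (opnorm B0inv <= M%:E)%E) ->
  (* assumption 6 *)
  (C0 = +oo%E -> use_g \/
     (C2 g /\
      (forall k, running g x eps k.+1 -> forall u v,
         Gbar_form ip g x Sop k u v = Gbar_form ip g x Sop k v u /\
         0 <= Gbar_form ip g x Sop k u u) /\
      (exists M : R, forall k, running g x eps k.+1 -> forall u v,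
         `|Gbar_form ip g x Sop k u v| <= M * `|u| * `|v|))) ->
  (* conclusion *)
  exists2 C : R, 0 < C &
    forall k, running g x eps k ->
      exists2 Binv : X -> X, is_inverse (Bk ip g x cs l Sop tau k) Binv &
        (opnorm (Bk ip g x cs l Sop tau k) + opnorm Binv
           <= (C * Num.max 1 (`|g (x k)| `^ (- c2)))%:E)%E.
Proof.
(* Of the line search only the Armijo inequality is used. *)
move=> ip_inner eps0 c0_ge0 c0C0 cs0 c10 _ tau0 x_0 S_spd B_d x_step tau_adm _ _ _
  L0 g_lip [M S_le] line_search B0_inv Gbar.
have decrease k : running g x eps k ->
    exists2 t : R, 0 <= t & J (x k.+1) <= J (x k) + t * ip (g (x k)) (d k).
  move=> xk; rewrite x_step //.
  case: line_search =>
    [[/andP[b0 _] [/andP[s0 _] [backtrack _]]] | [/andP[s0 _] [_ wolfe]]].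
    have [i [-> [arm _]]] := backtrack k xk.
    exact: armijo_sufficient_decrease (ltW s0) (exprn_ge0 _ (ltW b0)) arm.
  have [a0 [arm _]] := wolfe k xk.
  exact: armijo_sufficient_decrease (ltW s0) (ltW a0) arm.
exact: Bk_opnorm_le ip_inner eps0 c0_ge0 c0C0 cs0 c10 tau0 x_0 S_spd S_le B_d tau_adm
  L0 g_lip decrease B0_inv Gbar.
Qed.
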